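(* Assume that for every $x\in V$ the functions $s\mapsto H(x,s)$ and $s\mapsto f_l(x,s)$ ($l=1,\dots,m$) are nondecreasing. If $(u^1,\dots,u^m)$ solves the discrete system (S), then $u^i(x)\,u^j(x)=0$ for all $x\in V$ and all $i\neq j$.
   Context: Let $G=(V,E)$ be a finite, connected, undirected graph with at least two vertices. For $x,y\in V$, $d(x,y)$ denotes the graph (shortest-path) distance, and $\deg(x)=|\{y\in V:(x,y)\in E\}|$. The boundary of $G$ is $$\partial G=\Big\{x\in V:\ \exists\, y\in V \text{ with } \tfrac{1}{\deg(x)}\textstyle\sum_{(x,z)\in E} d(z,y)<d(x,y)\Big\},$$ and the interior is $G^o=V\setminus\partial G$. For $r:V\to\mathbb{R}$, the mean value at $x$ is $\overline{r}(x)=\frac{1}{\deg(x)}\sum_{(x,y)\in E} r(y)$. Fix an integer $m\ge1$. Let $H:V\times[0,\infty)\to\mathbb{R}$ and $f_l:V\times[0,\infty)\to\mathbb{R}$ ($l=1,\dots,m$) be continuous in the second variable with $H(x,0)=0$ and $f_l(x,0)=0$ for all $x\in V$; they are extended to negative arguments by $H(x,s)=-H(x,-s)$ and $f_l(x,s)=-f_l(x,-s)$ for $s<0$. Let $\phi^l:\partial G\to[0,\infty)$ ($l=1,\dots,m$) be boundary data satisfying $\phi^i(x)\phi^j(x)=0$ for all $x\in\partial G$ and $i\neq j$. The discrete system (S) for $(u^1,\dots,u^m)$, $u^l:V\to\mathbb{R}$, is: for every $l=1,\dots,m$, $$u^l(x)=\max\Big(H\Big(x,\ \overline{u}^l(x)-\sum_{p\neq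 l}\overline{u}^p(x)\Big)-f_l\big(x,u^l(x)\big),\ 0\Big)\quad (x\in G^o),\qquad u^l(x)=\phi^l(x)\quad (x\in\partial G).$$ *)

From HB Require Import structures.
From mathcomp Require Import all_boot all_order all_algebra.
From mathcomp Require Import all_classical all_reals all_analysis.
Set Implicit Arguments. Unset Strict Implicit. Unset Printing Implicit Defensive.
Import Order.TTheory GRing.Theory Num.Theory.
Local Open Scope ring_scope.

(* A finite undirected graph on a finType V is given by an adjacency
   relation e (symmetric, irreflexive). *)

Fixpoint walk (V : finType) (e : rel V) (n : nat) (x y : V) : bool :=
  match n with
  | 0 => x == y
  | n'.+1 => [exists z, e x z && walk e n' z y]
  end.

Definition connected_graph (V : finType) (e : rel V) : Prop :=
  forall x y : V, exists n, walk e n x y.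

(* graph distance: least n with a walk of length n (shortest walks in a
   connected graph have length < #|V|) *)
Definition gdist (V : finType) (e : rel V) (x y : V) : nat :=
  find (fun n => walk e n x y) (iota 0 #|V|).

Definition deg (V : finType) (e : rel V) (x : V) : nat := #|[set y | e x y]|.

Definition mean (R : realType) (V : finType) (e : rel V) (r : V -> R) (x : V) : R :=
  (\sum_(y | e x y) r y) / (deg e x)%:R.

Definition gboundary (R : realType) (V : finType) (e : rel V) (x : V) : Prop :=
  exists y : V, mean e (fun z => ((gdist e z y)%:R : R)) x < (gdist e x y)%:R.

Definition ginterior (R : realType) (V : finType) (e : rel V) (x : V) : Prop :=
  ~ gboundary R e x.

Arguments gboundary R {V} e x.
Arguments ginterior R {V} e x.

From HB Require Import structures.
From mathcomp Require Import all_boot all_order all_algebra.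
From mathcomp Require Import all_classical all_reals all_analysis.
From mathcomp Require Import ring.
Import Order.TTheory GRing.Theory Num.Theory.
Import numFieldNormedType.Exports.
Local Open Scope classical_set_scope.
Local Open Scope ring_scope.

(* All components are nonnegative. Where u^i(x) > 0 at an interior x, the
   equation forces H(x, s_i) > f_i(x, u^i(x)) >= 0 for the argument
   s_i = mean u^i - sum_{p <> i} mean u^p, and an odd function that is
   nondecreasing on [0, oo) is positive only at positive arguments; so
   s_i > 0. But s_i + s_j = -2 sum_{p <> i, j} mean u^p <= 0, hence u^i(x)
   and u^j(x) cannot both be positive. On the boundary the data are
   disjointly supported by assumption. *)

Lemma odd_nondecreasing_gt0 {R : realDomainType} {F : R -> R} {s : R} :
  F 0 = 0 -> (forall s, s < 0 -> F s = - F (- s)) ->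
  (forall s t, 0 <= s -> s <= t -> F s <= F t) ->
  0 < F s -> 0 < s.
Proof.
move=> F0 Fodd Fmon Fs_gt0; rewrite ltNge; apply/negP; rewrite le_eqVlt.
case/orP=> [/eqP s0 | s_lt0]; first by move: Fs_gt0; rewrite s0 F0 ltxx.
have : 0 <= F (- s) by rewrite -F0; apply: Fmon; rewrite // oppr_ge0 ltW.
by rewrite -[F (- s)]opprK -Fodd // oppr_ge0 leNgt Fs_gt0.
Qed.

Lemma mean_ge0 (R : realType) (V : finType) (e : rel V) (r : V -> R) (x : V) :
  (forall y, 0 <= r y) -> 0 <= mean e r x.
Proof. by move=> r_ge0; rewrite divr_ge0 ?sumr_ge0. Qed.

Lemma competition_sum_le0 {R : numDomainType} {m : nat} {a : 'I_m -> R}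
    {i j : 'I_m} :
  (forall p, 0 <= a p) -> i != j ->
  (a i - \sum_(p < m | p != i) a p) + (a j - \sum_(p < m | p != j) a p) <= 0.
Proof.
move=> a_ge0 ij; rewrite (bigD1 j) 1?eq_sym //= (bigD1 i ij) /=.
set S := \sum_(p < m | (p != i) && (p != j)) a p.
rewrite (eq_bigl (fun p => (p != i) && (p != j))) -/S => [|p]; last by rewrite andbC.
have -> : a i - (a j + S) + (a j - (a i + S)) = - (S + S) by ring.
by rewrite oppr_le0 addr_ge0 // sumr_ge0.
Qed.

Theorem lemma1 (R : realType) (V : finType) (e : rel V) (m : nat)
  (H : V -> R -> R) (f : 'I_m -> V -> R -> R)
  (phi : 'I_m -> V -> R) (u : 'I_m -> V -> R) :
  (* graph hypotheses *)
  symmetric e -> irreflexive e -> connected_graph e -> (1 < #|V|)%N ->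
  (0 < m)%N ->
  (* H and f_l: continuous on [0,oo), vanish at 0, odd extension *)
  (forall x, {within [set s : R | 0 <= s], continuous (H x)}) ->
  (forall l x, {within [set s : R | 0 <= s], continuous (f l x)}) ->
  (forall x, H x 0 = 0) -> (forall l x, f l x 0 = 0) ->
  (forall x s, s < 0 -> H x s = - H x (- s)) ->
  (forall l x s, s < 0 -> f l x s = - f l x (- s)) ->
  (* monotonicity assumption *)
  (forall x s t, 0 <= s -> s <= t -> H x s <= H x t) ->
  (forall l x s t, 0 <= s -> s <= t -> f l x s <= f l x t) ->
  (* gboundary data *)
  (forall l x, gboundary R e x -> 0 <= phi l x) ->
  (forall i j x, i != j -> gboundary R e x -> phi i x * phi j x = 0) ->
  (* (u^1,...,u^m) solves (S) *)
  (forall l x, ginterior R e x ->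
     u l x = Num.max (H x (mean e (u l) x
                            - \sum_(p < m | p != l) mean e (u p) x)
                      - f l x (u l x)) 0) ->
  (forall l x, gboundary R e x -> u l x = phi l x) ->
  forall (i j : 'I_m) (x : V), i != j -> u i x * u j x = 0.
Proof.
move=> _ _ _ _ _ _ _ H0 f0 Hodd _ Hmon fmon phi_ge0 phi_disj Sint Sbd i j x ij.
have u_ge0 l y : 0 <= u l y.
  have [y_bd | y_int] := pselect (gboundary R e y); first by rewrite Sbd ?phi_ge0.
  by rewrite Sint // le_max lexx orbT.
have [x_bd | x_int] := pselect (gboundary R e x); first by rewrite !Sbd ?phi_disj.
have arg_gt0 l : 0 < u l x ->
    0 < mean e (u l) x - \sum_(p < m | p != l) mean e (u p) x.
  rewrite Sint // lt_max ltxx orbF subr_gt0 => f_lt_H.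
  apply: (odd_nondecreasing_gt0 (H0 x) (Hodd x) (Hmon x)).
  by apply: le_lt_trans f_lt_H; rewrite -(f0 l x) fmon.
have u_gt0 l : u l x != 0 -> 0 < u l x by rewrite lt_neqAle eq_sym u_ge0 andbT.
have [ui0 | /u_gt0 /arg_gt0 si_gt0] := eqVneq (u i x) 0; first by rewrite ui0 mul0r.
have [uj0 | /u_gt0 /arg_gt0 sj_gt0] := eqVneq (u j x) 0; first by rewrite uj0 mulr0.
have mean_u_ge0 p : 0 <= mean e (u p) x by apply: mean_ge0.
have := lt_le_trans (addr_gt0 si_gt0 sj_gt0) (competition_sum_le0 mean_u_ge0 ij).
by rewrite ltxx.
Qed.
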